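(* Let $f\colon\mathbb{R}^k_+\to\operatorname{int}(\mathbb{R}^k_+)$ be continuous and concave with respect to the cone order, with a fixed point $x^\star\in\operatorname{int}(\mathbb{R}^k_+)$. Let $U\subset\operatorname{int}(\mathbb{R}^k_+)$ be a compact neighborhood of $x^\star$, and let $c\in[0,1)$ be a local contraction factor of $f$ on $U$, i.e., $d_T(f(x),f(y))\le c\,d_T(x,y)$ for all $x,y\in U$. Let $\rho=\rho(f_\infty)$ be the spectral radius of the asymptotic mapping of $f$. Then $c\ge\rho$.
   Context: $\mathbb{R}^k_+$ is the nonnegative orthant, $\operatorname{int}(\mathbb{R}^k_+)$ the vectors with strictly positive coordinates, $x\le y$ means $y-x\in\mathbb{R}^k_+$. Concavity w.r.t. the cone order: $f(tx+(1-t)y)\ge tf(x)+(1-t)f(y)$ for $x,y\in\mathbb{R}^k_+$, $t\in(0,1)$. Thompson's metric: $d_T(x,y)=\ln\max\{M(x,y),M(y,x)\}$, $M(x,y)=\inf\{\beta>0:x\le\beta y\}$. The asymptotic mapping of $f$ is $f_\infty\colon\mathbb{R}^k_+\to\mathbb{R}^k_+$, $f_\infty(x)=\lim_{p\to\infty}\frac1p f(px)$ (this limit exists for such $f$), and its spectral radius is $\rho(f_\infty)=\max\{\lambda\ge 0: \exists x\in\mathbb{R}^k_+\setminus\{0\},\ f_\infty(x)=\lambda x\}$ (this maximum exists). Compactness and neighborhoods refer to the usual topology of $\mathbb{R}^k$. *)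

From HB Require Import structures.
From mathcomp Require Import all_boot all_order all_algebra.
From mathcomp Require Import all_classical all_reals all_analysis.
Set Implicit Arguments. Unset Strict Implicit. Unset Printing Implicit Defensive.
Import Order.TTheory GRing.Theory Num.Theory.
Import numFieldNormedType.Exports.
Local Open Scope classical_set_scope.
Local Open Scope ring_scope.

Section Defs.
Variables (R : realType) (k : nat).
Implicit Types (x y : 'rV[R]_k) (f : 'rV[R]_k -> 'rV[R]_k).

Definition orthant : set 'rV[R]_k := [set x | forall i, 0 <= x ord0 i].
Definition int_orthant : set 'rV[R]_k := [set x | forall i, 0 < x ord0 i].
Definition cone_le x y : Prop := orthant (y - x).

Definition cone_concave f : Prop :=
  forall x y (t : R), orthant x -> orthant y -> 0 < t < 1 ->
    cone_le (t *: f x + (1 - t) *: f y) (f (t *: x + (1 - t) *: y)).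

Definition Mth x y : R := inf [set b : R | 0 < b /\ cone_le x (b *: y)].

Definition thompson x y : R := ln (Num.max (Mth x y) (Mth y x)).

Definition asymptotic f : 'rV[R]_k -> 'rV[R]_k :=
  fun x => lim ((fun p : R => p^-1 *: f (p *: x)) @ +oo).

Definition spectral_radius (g : 'rV[R]_k -> 'rV[R]_k) : R :=
  sup [set l : R | 0 <= l /\ exists x, orthant x /\ x != 0 /\ g x = l *: x].

End Defs.

(* Let f_oo(v) = l v with v >= 0 nonzero.  Concavity makes p |-> f(p v) / p
   nonincreasing, so it decreases to f_oo(v); writing xstar + s v as a convex
   combination of xstar and (s / u) v then gives f(xstar + s v) >= xstar + s l v
   for every s > 0.  With a = max_i v_i / xstar_i, Thompson's metric satisfies
   d_T(f(xstar + s v), xstar) >= ln(1 + s l a) and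
   d_T(xstar + s v, xstar) <= ln(1 + s a).  For small s both points lie in U, so
   ln(1 + s l a) <= c ln(1 + s a); as w / (1 + w) <= ln(1 + w) <= w, this gives
   l <= c + s c l a, and s -> 0 yields l <= c. *)

From HB Require Import structures.
From mathcomp Require Import all_boot all_order all_algebra.
From mathcomp Require Import all_classical all_reals all_analysis.
From mathcomp Require Import ring lra.
Import Order.TTheory GRing.Theory Num.Theory.
Import numFieldNormedType.Exports.
Local Open Scope classical_set_scope.
Local Open Scope ring_scope.
Set Implicit Arguments. Unset Strict Implicit. Unset Printing Implicit Defensive.

Section real_lemmas.
Context {R : realType}.

Lemma ler_of_ler_addrM (a b x d : R) : 0 < d -> 0 <= x ->
  (forall u, 0 < u < d -> b <= a + u * x) -> b <= a.
Proof.
move=> d0 x0 b_le; apply/ler_addgt0Pr => e e0.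
set u := Num.min (d / 2) (e / (x + 1)).
have u0 : 0 < u by rewrite lt_min !divr_gt0 //; lra.
have ud : u < d by rewrite gt_min; apply/orP; left; lra.
have uxe : u * x <= e.
  have : u <= e / (x + 1) by rewrite ge_min lexx orbT.
  rewrite ler_pdivlMr; last lra.
  nra.
by apply: le_trans (b_le u _) _; [rewrite u0 ud | rewrite lerD2l].
Qed.

Lemma div1D_le_ln1D (w : R) : 0 <= w -> w / (1 + w) <= ln (1 + w).
Proof.
move=> w0; have w1 : 0 < 1 + w by lra.
have : -1 < (1 + w)^-1 - 1 by have := invr_gt0 (1 + w); rewrite w1; lra.
move=> /le_ln1Dx; rewrite addrC subrK lnV ?posrE //.
have -> : w / (1 + w) = 1 - (1 + w)^-1 by field; rewrite gt_eqF.
lra.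
Qed.

Lemma ler_of_ln1D_le (a l c : R) : 0 < a -> 0 <= l -> 0 <= c ->
  ln (1 + l * a) <= c * ln (1 + a) -> l <= c + c * l * a.
Proof.
move=> a0 l0 c0 ln_le.
have la0 : 0 <= l * a by rewrite mulr_ge0 // ltW.
have ln_a : ln (1 + a) <= a by apply: le_ln1Dx; lra.
have la_le : l * a / (1 + l * a) <= c * a.
  apply: le_trans (div1D_le_ln1D la0) (le_trans ln_le _).
  exact: ler_wpM2l.
rewrite ler_pdivrMr in la_le; last lra.
have : a * l <= a * (c + c * l * a) by rewrite mulrC; lra.
by rewrite ler_pM2l.
Qed.

End real_lemmas.

Section limits.
Context {R : realType}.

Lemma nonincreasing_pinfty_cvgr (u : R -> R) (m : R) :
  (forall q p, 0 < q -> q <= p -> u p <= u q) -> (forall p, 0 < p -> m <= u p) ->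
  exists l, u r @[r --> +oo] --> l /\ forall p, 0 < p -> l <= u p.
Proof.
move=> u_noninc u_ge.
have max1_gt0 (r : R) : 0 < Num.max r 1 by rewrite lt_max ltr01 orbT.
pose g r := - u (Num.max r 1).
have g_nondec : nondecreasing_fun g.
  move=> r r' rr'; rewrite /g lerN2 u_noninc //.
  by rewrite ge_max !le_max rr' lexx !orbT.
have g_ub : has_ubound (range g).
  by exists (- m) => _ [r _ <-]; rewrite /g lerN2 u_ge.
exists (- sup (range g)); split.
- have ug : \forall r \near +oo, - g r = u r.
    by apply: filterS (nbhs_pinfty_ge (num_real 1)) => r r1; rewrite /g opprK max_l.
  exact: cvg_trans (near_eq_cvg ug) (cvgN (nondecreasing_cvgr g_nondec g_ub)).
- move=> p p0; rewrite lerNl; apply: (@le_trans _ _ (g p)).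
    by rewrite /g lerN2 u_noninc // le_max lexx.
  by apply: ub_le_sup => //; exists p.
Qed.

Lemma cvg_row_entries {T : Type} {F : set_system T} {FF : Filter F} {k : nat}
    (h : T -> 'rV[R]_k) (l : 'I_k -> R) :
  (forall i, h t ord0 i @[t --> F] --> l i) -> h t @[t --> F] --> \row_i l i.
Proof.
move=> hl; apply/cvgrPdist_le => /= e e0.
near=> t.
rewrite /Num.Def.normr/= mx_normrE (bigmax_le _ (ltW e0))//= => -[a b] _.
rewrite (ord1 a) !mxE.
move: b; near: t; apply: filter_forall => b.
exact: ((cvgrPdist_le _ _).1 (hl b) e e0).
Unshelve. all: by end_near. Qed.

End limits.

Section orthant.
Context {R : realType} {k : nat}.
Implicit Types (x y v : 'rV[R]_k).

Lemma orthant0 : orthant (0 : 'rV[R]_k).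
Proof. by move=> i; rewrite mxE. Qed.

Lemma orthantZ (a : R) x : 0 <= a -> orthant x -> orthant (a *: x).
Proof. by move=> a0 x0 i; rewrite mxE mulr_ge0. Qed.

Lemma orthantD x y : orthant x -> orthant y -> orthant (x + y).
Proof. by move=> x0 y0 i; rewrite mxE addr_ge0. Qed.

Lemma cone_leP x y : cone_le x y <-> forall i, x ord0 i <= y ord0 i.
Proof.
by split=> xy i; [have := xy i | rewrite /cone_le /orthant]; rewrite !mxE subr_ge0.
Qed.

Lemma int_orthant_dominates x y :
  int_orthant y -> exists b : R, 0 < b /\ cone_le x (b *: y).
Proof.
move=> y_gt0; pose b := 1 + \big[Num.max/0]_i (`|x ord0 i| / y ord0 i).
have b_gt0 : 0 < b by rewrite ltr_pwDl // bigmax_ge_id.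
exists b; split => //; apply/cone_leP => i; rewrite mxE -ler_pdivrMr; last exact: y_gt0.
have := le_bigmax 0 (fun i => `|x ord0 i| / y ord0 i) i.
have : x ord0 i / y ord0 i <= `|x ord0 i| / y ord0 i.
  by apply: ler_wpM2r; [rewrite invr_ge0 ltW // y_gt0 | exact: ler_norm].
rewrite /b; lra.
Qed.

Lemma Mth_le x y (b : R) : 0 < b -> cone_le x (b *: y) -> Mth x y <= b.
Proof.
move=> b0 xby; apply: ge_inf => //.
by exists 0 => z [z0 _]; exact: ltW.
Qed.

Lemma Mth_ge x y (j : 'I_k) (b : R) :
  int_orthant y -> b * y ord0 j <= x ord0 j -> b <= Mth x y.
Proof.
move=> y_gt0 byx; apply: lb_le_inf; first exact: int_orthant_dominates.
move=> z [_ /cone_leP/(_ j)]; rewrite mxE => xzy.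
by rewrite -(ler_pM2r (y_gt0 j)) (le_trans byx).
Qed.

Lemma thompson_le_ln x y (b : R) :
  1 <= b -> cone_le x y -> cone_le y (b *: x) -> thompson y x <= ln b.
Proof.
move=> b1 xy ybx; have b0 : 0 < b by apply: lt_le_trans b1.
have Myx : Mth y x <= b by exact: Mth_le.
have Mxy : Mth x y <= b.
  by apply: le_trans b1; apply: Mth_le; rewrite ?scale1r.
have [M0|M0] := ltP 0 (Num.max (Mth y x) (Mth x y)).
  by rewrite /thompson ler_ln ?posrE // ge_max Myx.
by apply: le_trans (ln_ge0 b1); apply: ln_le0; apply: le_trans M0 _.
Qed.

Lemma ln_le_thompson x y (j : 'I_k) (b : R) :
  0 < b -> int_orthant x -> b * x ord0 j <= y ord0 j -> ln b <= thompson y x.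
Proof.
move=> b0 x_gt0 bxy; have Myx := Mth_ge x_gt0 bxy.
have M0 : 0 < Num.max (Mth y x) (Mth x y) by rewrite lt_max (lt_le_trans b0 Myx).
by rewrite /thompson ler_ln ?posrE // le_max Myx.
Qed.

Lemma orthant_max_ratio v x : int_orthant x -> orthant v -> v != 0 ->
  exists j (a : R), [/\ 0 < a, v ord0 j = a * x ord0 j
                      & forall i, v ord0 i <= a * x ord0 i].
Proof.
move=> x_gt0 v_ge0 v_neq0.
have /existsP[i0 vi0] : [exists i, v ord0 i != 0].
  apply: contraNT v_neq0 => /existsPn v0; apply/eqP/rowP => i.
  by rewrite mxE; apply/eqP/negbNE/v0.
case: (@arg_maxP _ _ _ i0 xpredT (fun i => v ord0 i / x ord0 i) isT) => j _ jmax.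
exists j, (v ord0 j / x ord0 j); split.
- apply: lt_le_trans (jmax i0 isT).
  by rewrite divr_gt0 ?(x_gt0 i0) // lt0r vi0 v_ge0.
- by rewrite divfK // lt0r_neq0 //; apply: x_gt0.
- by move=> i; rewrite -ler_pdivrMr; [exact: jmax | exact: x_gt0].
Qed.

End orthant.

Section concave.
Context {R : realType} {k : nat}.
Implicit Types (x v : 'rV[R]_k).

Variable f : 'rV[R]_k -> 'rV[R]_k.
Hypotheses (f_orthant : forall x, orthant x -> orthant (f x))
           (f_concave : cone_concave f).

Lemma concave_monotone x y : orthant x -> cone_le x y -> cone_le (f x) (f y).
Proof.
move=> x0 xy; apply/cone_leP => i.
apply: (@ler_of_ler_addrM _ _ _ (f x ord0 i) 1) => // [|u /andP[u0 u1]].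
  exact: f_orthant.
(* y = (1 - u) x + u z with z in the orthant, and f z >= 0. *)
pose z := x + u^-1 *: (y - x).
have z0 : orthant z.
  by apply: orthantD => //; apply: orthantZ => //; rewrite invr_ge0 ltW.
have yE : (1 - u) *: x + (1 - (1 - u)) *: z = y.
  by apply/rowP => j; rewrite !mxE; field; rewrite gt_eqF.
have t01 : 0 < 1 - u < 1 by apply/andP; split; lra.
have /cone_leP/(_ i) := f_concave x0 z0 t01; rewrite yE !mxE => fy.
have := f_orthant z0 i; nra.
Qed.

Lemma concave_scaled_nonincreasing v (i : 'I_k) (q p : R) :
  orthant v -> 0 < q -> q <= p ->
  p^-1 * f (p *: v) ord0 i <= q^-1 * f (q *: v) ord0 i.
Proof.
move=> v0 q0; rewrite le_eqVlt => /predU1P[<-//|qp].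
have p0 : 0 < p by apply: lt_trans qp.
(* q v = t (p v) + (1 - t) 0, and f 0 >= 0. *)
pose t := q / p.
have t01 : 0 < t < 1 by rewrite divr_gt0 //= ltr_pdivrMr ?mul1r.
have /cone_leP/(_ i) := f_concave (orthantZ (ltW p0) v0) orthant0 t01.
rewrite scaler0 addr0 scalerA divfK ?gt_eqF // !mxE => fq.
have f0 := f_orthant orthant0 i.
have {}fq : t * f (p *: v) ord0 i <= f (q *: v) ord0 i by nra.
have -> : p^-1 = q^-1 * t by rewrite mulrA mulVf ?gt_eqF // mul1r.
by rewrite -mulrA ler_wpM2l // invr_ge0 ltW.
Qed.

Lemma asymptotic_le_scaled v (p : R) : orthant v -> 0 < p ->
  cone_le (asymptotic f v) (p^-1 *: f (p *: v)).
Proof.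
move=> v0 p0; pose h r := r^-1 *: f (r *: v).
have /choice[l hl] : forall i, exists l, h r ord0 i @[r --> +oo] --> l /\
    forall p, 0 < p -> l <= h p ord0 i.
  move=> i.
  apply: (@nonincreasing_pinfty_cvgr _ _ 0) => [q r q0 qr | r r0].
    by rewrite !mxE; exact: concave_scaled_nonincreasing.
  rewrite mxE; apply: mulr_ge0; first by rewrite invr_ge0 ltW.
  exact: (f_orthant (orthantZ (ltW r0) v0)).
have h_cvg : h r @[r --> +oo] --> \row_i l i.
  by apply: cvg_row_entries => i; exact: (hl i).1.
rewrite /asymptotic (cvg_lim _ h_cvg) //.
by apply/cone_leP => i; rewrite mxE (hl i).2.
Qed.

Lemma concave_add_asymptotic x v (s : R) : orthant x -> orthant v -> 0 < s ->
  cone_le (f x + s *: asymptotic f v) (f (x + s *: v)).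
Proof.
move=> x0 v0 s0; apply/cone_leP => i.
apply: (@ler_of_ler_addrM _ _ _ (f x ord0 i) 1) => // [|u /andP[u0 u1]].
  exact: f_orthant.
(* (1 - u) x + u (p v) <= x + s v, and u f(p v) = s f(p v) / p >= s f_oo(v). *)
pose p := s / u.
have p0 : 0 < p by rewrite divr_gt0.
have t01 : 0 < 1 - u < 1 by apply/andP; split; lra.
have pv0 : orthant (p *: v) by apply: orthantZ => //; exact: ltW.
have /cone_leP/(_ i) := f_concave x0 pv0 t01; rewrite !mxE => fz.
have up : (1 - (1 - u)) * p = s by rewrite /p; field; rewrite gt_eqF.
have z_le : cone_le ((1 - u) *: x + (1 - (1 - u)) *: (p *: v)) (x + s *: v).
  by apply/cone_leP => j; rewrite !mxE mulrA up; have := x0 j; nra.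
have z0 : orthant ((1 - u) *: x + (1 - (1 - u)) *: (p *: v)).
  by apply: orthantD; apply: orthantZ => //; lra.
have /cone_leP/(_ i) := concave_monotone z0 z_le.
have /cone_leP/(_ i) := asymptotic_le_scaled v0 p0; rewrite !mxE => asym fmono.
have : s * (p^-1 * f (p *: v) ord0 i) = (1 - (1 - u)) * f (p *: v) ord0 i.
  by rewrite -up -mulrA mulVKf // gt_eqF.
have := ler_wpM2l (ltW s0) asym.
lra.
Qed.

End concave.

Lemma nbhs_segment {R : realFieldType} {V : normedModType R} (x v : V) (U : set V) :
  nbhs x U -> exists2 d : R, 0 < d & forall s, 0 < s < d -> U (x + s *: v).
Proof.
move=> /nbhs_ballP[e e0 xeU]; exists (e / (`|v| + 1)) => [|s /andP[s0 sd]].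
  by rewrite divr_gt0 // ltr_pwDr.
apply: xeU; rewrite -ball_normE /ball_ /= opprD addNKr normrN normrZ gtr0_norm //.
rewrite ltr_pdivlMr ?ltr_pwDr // in sd.
have := normr_ge0 v; nra.
Qed.

Lemma eigenvalue_le_local_contraction {R : realType} {k : nat}
    (f : 'rV[R]_k -> 'rV[R]_k) (xstar : 'rV[R]_k) (U : set 'rV[R]_k) (c l : R) v :
  (forall x, orthant x -> orthant (f x)) -> cone_concave f ->
  int_orthant xstar -> f xstar = xstar -> nbhs xstar U -> 0 <= c ->
  (forall x y, U x -> U y -> thompson (f x) (f y) <= c * thompson x y) ->
  0 <= l -> orthant v -> v != 0 -> asymptotic f v = l *: v -> l <= c.
Proof.
move=> f_orthant f_concave xstar_gt0 f_xstar U_nbhs c0 f_contr l0 v0 v_neq0 f_v.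
have xstar0 : orthant xstar by move=> i; exact/ltW.
have [j [a [a0 vj v_le]]] := orthant_max_ratio xstar_gt0 v0 v_neq0.
have [d d0 U_seg] := nbhs_segment v U_nbhs.
apply: (ler_of_ler_addrM d0 (_ : 0 <= c * l * a)) => [|s /andP[s0 sd]].
  by rewrite !mulr_ge0 // ltW.
have lower : ln (1 + l * (s * a)) <= thompson (f (xstar + s *: v)) xstar.
  apply: (ln_le_thompson (j := j)) => //.
    by have := mulr_ge0 l0 (ltW (mulr_gt0 s0 a0)); lra.
  have /cone_leP/(_ j) := concave_add_asymptotic f_orthant f_concave xstar0 v0 s0.
  by rewrite f_xstar f_v !mxE vj; lra.
have upper : thompson (xstar + s *: v) xstar <= ln (1 + s * a).
  apply: thompson_le_ln.
  - by have := mulr_ge0 (ltW s0) (ltW a0); lra.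
  - by apply/cone_leP => i; rewrite !mxE; have := v0 i; nra.
  - by apply/cone_leP => i; rewrite !mxE; have := v_le i; nra.
have U_s : U (xstar + s *: v) by apply: U_seg; rewrite s0 sd.
have := f_contr _ _ U_s (nbhs_singleton U_nbhs); rewrite f_xstar => contr.
have := le_trans lower (le_trans contr (ler_wpM2l c0 upper)).
move=> /(ler_of_ln1D_le (mulr_gt0 s0 a0) l0 c0); lra.
Qed.

Unset Implicit Arguments. Set Strict Implicit.

Theorem proposition4 (R : realType) (k : nat) (f : 'rV[R]_k -> 'rV[R]_k)
  (xstar : 'rV[R]_k) (U : set 'rV[R]_k) (c : R) :
  (forall x, orthant x -> int_orthant (f x)) ->
  {within orthant (R:=R) (k:=k), continuous f} ->
  cone_concave f ->
  int_orthant xstar -> f xstar = xstar ->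
  compact U -> U `<=` int_orthant (R:=R) (k:=k) -> nbhs xstar U ->
  0 <= c -> c < 1 ->
  (forall x y, U x -> U y -> thompson (f x) (f y) <= c * thompson x y) ->
  spectral_radius (asymptotic f) <= c.
Proof.
move=> f_int _ f_concave xstar_gt0 f_xstar _ _ U_nbhs c0 _ f_contr.
have f_orthant x : orthant x -> orthant (f x) by move=> /f_int fx i; exact/ltW.
rewrite /spectral_radius; set S := [set l | _].
have [S0|S0] := pselect (S !=set0); last by rewrite sup_out // => -[].
apply: ge_sup => // l [l0 [v [v0 [v_neq0 f_v]]]].
exact: (eigenvalue_le_local_contraction f_orthant f_concave xstar_gt0 f_xstar
          U_nbhs c0 f_contr l0 v0 v_neq0 f_v).
Qed.
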